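(* Let $w\in W$. Then (a) $\langle w\cdot 0,\alpha_0^\vee\rangle\geq -2(h-1)$; and (b) $\langle w\cdot 0,\alpha^\vee\rangle\leq h-2$ for every simple root $\alpha\in S$.
   Context: $R$ is an irreducible root system with positive roots $R^+$, simple roots $S$, Weyl group $W$; the inner product is normalized so that short roots $\alpha$ satisfy $\langle\alpha,\alpha\rangle=2$, and $\alpha^\vee=2\alpha/\langle\alpha,\alpha\rangle$. $\rho$ is half the sum of the positive roots, $\alpha_0$ is the highest short root, $h=\langle\rho,\alpha_0^\vee\rangle+1$ is the Coxeter number, and the dot action is $w\cdot\lambda=w(\lambda+\rho)-\rho$. *)

From HB Require Import structures.
From mathcomp Require Import all_boot all_order all_algebra.
From mathcomp Require Import boolp reals.
Set Implicit Arguments. Unset Strict Implicit. Unset Printing Implicit Defensive.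
Import Order.TTheory GRing.Theory Num.Theory.
Local Open Scope ring_scope.

Section RootSystems.
Variables (R : realType) (n : nat).
Notation V := 'rV[R]_n.

Definition dot (u v : V) : R := (u *m v^T) 0 0.

Definition coroot (a : V) : V := (2 / dot a a) *: a.

Definition refl (a : V) (v : V) : V := v - dot v (coroot a) *: a.

Definition is_root_system (Phi : seq V) : Prop :=
  [/\ uniq Phi /\ (0 : V) \notin Phi, (<<Phi>>%VS = fullv),
      (forall a b, a \in Phi -> b \in Phi -> refl a b \in Phi),
      (forall a b, a \in Phi -> b \in Phi -> exists z : int, dot b (coroot a) = z%:~R)
    & (forall a (c : R), a \in Phi -> c *: a \in Phi -> c = 1 \/ c = -1)].

Definition irreducible_rs (Phi : seq V) : Prop :=
  forall P : pred V,
    (forall a b, a \in Phi -> b \in Phi -> P a -> ~~ P b -> dot a b = 0) ->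
    all P Phi \/ all (predC P) Phi.

Definition nonneg_comb (S : seq V) (v : V) : Prop :=
  exists k : 'I_(size S) -> int,
    (forall i, 0 <= k i) /\ v = \sum_(i < size S) (k i)%:~R *: S`_i.

Definition is_base (Phi S : seq V) : Prop :=
  [/\ {subset S <= Phi}, free S &
      forall b, b \in Phi -> nonneg_comb S b \/ nonneg_comb S (- b)].

Definition pos_roots (Phi S : seq V) : seq V :=
  [seq b <- Phi | `[< nonneg_comb S b >]].

Definition rho (Phi S : seq V) : V := 2^-1 *: \sum_(b <- pos_roots Phi S) b.

Definition short_root (Phi : seq V) (a : V) : Prop :=
  a \in Phi /\ forall b, b \in Phi -> dot a a <= dot b b.

Definition short_normalized (Phi : seq V) : Prop :=
  forall a, short_root Phi a -> dot a a = 2.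

Definition highest_short_root (Phi S : seq V) (a0 : V) : Prop :=
  short_root Phi a0 /\ forall b, short_root Phi b -> nonneg_comb S (a0 - b).

Definition coxeter_number (Phi S : seq V) (a0 : V) : R :=
  dot (rho Phi S) (coroot a0) + 1.

Inductive weyl (Phi : seq V) : (V -> V) -> Prop :=
  | weyl_id : weyl Phi id
  | weyl_refl (a : V) (w : V -> V) :
      a \in Phi -> weyl Phi w -> weyl Phi (fun v => refl a (w v)).

Definition dot_act (Phi S : seq V) (w : V -> V) (l : V) : V :=
  w (l + rho Phi S) - rho Phi S.

End RootSystems.

From HB Require Import structures.
From mathcomp Require Import all_boot all_order all_algebra.
From mathcomp Require Import boolp reals.
From mathcomp Require Import ring lra zify.
Set Implicit Arguments. Unset Strict Implicit. Unset Printing Implicit Defensive.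
Import Order.TTheory GRing.Theory Num.Theory.
Local Open Scope ring_scope.

(* Since w . 0 = w rho - rho and the Weyl group acts by isometries permuting
   the roots, moving w across the inner product reduces both bounds to
   <rho, b^vee> <= <rho, alpha_0> = h - 1 for every root b, together with
   <rho, a^vee> = 1 for simple a.  For short b this holds because alpha_0
   dominates every short root.  For long b, irreducibility yields a short
   root d with <d, b^vee> = 1; then b = d + (b - d) with both summands short
   and <b, b> >= 4, so <rho, b^vee> <= (2 / <b, b>) * 2 (h - 1) <= h - 1. *)

Section InnerProduct.
Variables (R : realType) (n : nat).
Notation V := 'rV[R]_n.
Implicit Types (u v x a : V).

Lemma dotE u v : dot u v = \sum_(j < n) u 0 j * v 0 j.
Proof. by rewrite /dot !mxE; apply: eq_bigr => j _; rewrite !mxE. Qed.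

Lemma dotC u v : dot u v = dot v u.
Proof. by rewrite !dotE; apply: eq_bigr => j _; rewrite mulrC. Qed.

Lemma dotDl u v x : dot (u + v) x = dot u x + dot v x.
Proof. by rewrite !dotE -big_split; apply: eq_bigr => j _; rewrite mxE mulrDl. Qed.

Lemma dotZl (c : R) u x : dot (c *: u) x = c * dot u x.
Proof. by rewrite !dotE mulr_sumr; apply: eq_bigr => j _; rewrite mxE mulrA. Qed.

Lemma dot0l x : dot 0 x = 0.
Proof. by rewrite -(scale0r 0) dotZl mul0r. Qed.

Lemma dotNl u x : dot (- u) x = - dot u x.
Proof. by rewrite -scaleN1r dotZl mulN1r. Qed.

Lemma dotBl u v x : dot (u - v) x = dot u x - dot v x.
Proof. by rewrite dotDl dotNl. Qed.

Lemma dotDr u v x : dot x (u + v) = dot x u + dot x v.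
Proof. by rewrite !(dotC x) dotDl. Qed.

Lemma dotZr (c : R) u x : dot x (c *: u) = c * dot x u.
Proof. by rewrite !(dotC x) dotZl. Qed.

Lemma dotNr u x : dot x (- u) = - dot x u.
Proof. by rewrite !(dotC x) dotNl. Qed.

Lemma dotBr u v x : dot x (u - v) = dot x u - dot x v.
Proof. by rewrite !(dotC x) dotBl. Qed.

Lemma dot_suml (I : Type) (s : seq I) (F : I -> V) x :
  dot (\sum_(i <- s) F i) x = \sum_(i <- s) dot (F i) x.
Proof.
elim: s => [|a s IH]; first by rewrite !big_nil dot0l.
by rewrite !big_cons dotDl IH.
Qed.

Lemma dot_self_ge0 u : 0 <= dot u u.
Proof. by rewrite dotE; apply: sumr_ge0 => j _; rewrite -expr2 sqr_ge0. Qed.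

Lemma dot_self_eq0 u : (dot u u == 0) = (u == 0).
Proof.
apply/idP/eqP => [|->]; last by rewrite dot0l.
rewrite dotE => /eqP/psumr_eq0P sq0; apply/rowP => j; rewrite mxE.
apply/eqP; rewrite -sqrf_eq0 expr2; apply/eqP/sq0 => // i _.
by rewrite -expr2 sqr_ge0.
Qed.

Lemma dot_self_gt0 u : u != 0 -> 0 < dot u u.
Proof. by move=> u0; rewrite lt_def dot_self_eq0 u0 dot_self_ge0. Qed.

Lemma dot_sqr_le u v : 0 < dot v v -> dot u v ^+ 2 <= dot u u * dot v v.
Proof.
move=> v_gt0; set c := dot u v / dot v v.
have := dot_self_ge0 (u - c *: v).
rewrite !(dotBl, dotBr, dotZl, dotZr) (dotC v u).
have E : (dot u u - c * dot u v - c * (dot u v - c * dot v v)) * dot v v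
         = dot u u * dot v v - dot u v ^+ 2 by rewrite /c; field; rewrite gt_eqF.
by move=> e_ge0; rewrite -subr_ge0 -E mulr_ge0 // ltW.
Qed.

Lemma dot_coroot v a : dot v (coroot a) = 2 / dot a a * dot v a.
Proof. by rewrite /coroot dotZr. Qed.

Lemma dot_coroot_self a : a != 0 -> dot a (coroot a) = 2.
Proof. by move=> a0; rewrite dot_coroot -mulrA mulVf ?mulr1 ?dot_self_eq0. Qed.

Lemma coroot_norm2 a : dot a a = 2 -> coroot a = a.
Proof. by move=> a2; rewrite /coroot a2 divff ?scale1r // pnatr_eq0. Qed.

Lemma refl_adj a u v : dot (refl a u) v = dot u (refl a v).
Proof.
by rewrite /refl dotBl dotBr dotZl dotZr !dot_coroot (dotC a v) (dotC u v); ring.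
Qed.

Lemma reflK a : a != 0 -> involutive (refl a).
Proof.
move=> a0 u; rewrite {1}/refl {2}/refl dotBl dotZl dot_coroot_self //.
by apply/rowP => j; rewrite !mxE; ring.
Qed.

Lemma refl_iso a u v : a != 0 -> dot (refl a u) (refl a v) = dot u v.
Proof. by move=> a0; rewrite refl_adj reflK. Qed.

Lemma reflZ a (c : R) v : refl a (c *: v) = c *: refl a v.
Proof. by rewrite /refl dotZl scalerBr scalerA. Qed.

Lemma refl_self a : a != 0 -> refl a a = - a.
Proof.
by move=> a0; rewrite /refl dot_coroot_self //; apply/rowP => j; rewrite !mxE; ring.
Qed.

Lemma refl_coroot a : a != 0 -> refl a (coroot a) = - coroot a.
Proof. by move=> a0; rewrite /coroot reflZ refl_self // scalerN. Qed.

End InnerProduct.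

Lemma intr_sqr_lt4 (R : realDomainType) (z : int) :
  (z%:~R : R) ^+ 2 < 4 -> z != 0 -> z%:~R = 1 :> R \/ z%:~R = -1 :> R.
Proof.
move=> z2_lt4 z_neq0.
have z_gtN2 : (-2)%:~R < z%:~R :> R by rewrite mulrNz; nra.
have z_lt2 : z%:~R < 2%:~R :> R by nra.
rewrite ltr_int in z_gtN2; rewrite ltr_int in z_lt2.
have /orP[/eqP-> | /eqP->] : (z == 1) || (z == -1) by lia.
  by left.
by right; rewrite mulrNz.
Qed.

Lemma intr_gt1 (R : realDomainType) (z : int) : 1 < z%:~R :> R -> 2 <= z%:~R :> R.
Proof.
rewrite ltr1z => z_gt1; have : (2 <= z)%R by lia.
by rewrite -(ler_int R).
Qed.

Section RootSystem.
Variables (R : realType) (n : nat) (Phi S : seq 'rV[R]_n).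
Notation V := 'rV[R]_n.
Implicit Types (u v a b : V).
Hypothesis rsPhi : is_root_system Phi.
Hypothesis baseS : is_base Phi S.

Lemma root_neq0 b : b \in Phi -> b != 0.
Proof. by case: rsPhi => [[_ Phi0] _ _ _ _] bPhi; apply: contraNneq Phi0 => <-. Qed.

Lemma refl_root a b : a \in Phi -> b \in Phi -> refl a b \in Phi.
Proof. by case: rsPhi => _ _ reflPhi _ _; apply: reflPhi. Qed.

Lemma oppr_root b : b \in Phi -> - b \in Phi.
Proof. by move=> bPhi; rewrite -refl_self ?root_neq0 // refl_root. Qed.

Lemma cartan_int a b : a \in Phi -> b \in Phi ->
  exists z : int, dot b (coroot a) = z%:~R.
Proof. by case: rsPhi => _ _ _ cartan _; apply: cartan. Qed.

Lemma root_reduced a (c : R) : a \in Phi -> c *: a \in Phi -> c = 1 \/ c = -1.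
Proof. by case: rsPhi => _ _ _ _ reduced; apply: reduced. Qed.

Lemma base_root a : a \in S -> a \in Phi.
Proof. by case: baseS => SPhi _ _; apply: SPhi. Qed.

Lemma simple_root (j : 'I_(size S)) : S`_j \in Phi.
Proof. by rewrite base_root ?mem_nth. Qed.

Lemma base_coord0 (x : 'I_(size S) -> R) :
  \sum_(i < size S) x i *: S`_i = 0 -> forall i, x i = 0.
Proof. by case: baseS => _ /(@freeP _ _ _ (in_tuple S)) Sfree _; apply: Sfree. Qed.

Lemma sum_base_delta (j : 'I_(size S)) (c : R) :
  \sum_(i < size S) (if i == j then c else 0) *: S`_i = c *: S`_j.
Proof.
rewrite (bigD1 j) //= eqxx big1 ?addr0 // => i /negbTE->.
by rewrite scale0r.
Qed.

Lemma nonneg_comb_simple (j : 'I_(size S)) : nonneg_comb S S`_j.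
Proof.
exists (fun i => (i == j)%:R); split=> [i|]; first by rewrite ler0n.
rewrite -[LHS]scale1r -sum_base_delta; apply: eq_bigr => i _.
by case: (i == j).
Qed.

Lemma nonneg_comb_root_opp b : b \in Phi ->
  nonneg_comb S b -> ~ nonneg_comb S (- b).
Proof.
move=> bPhi [k [k_ge0 Eb]] [m [m_ge0 Em]].
have sum0 : \sum_(i < size S) ((k i)%:~R + (m i)%:~R) *: S`_i = 0.
  under eq_bigr do rewrite scalerDl.
  by rewrite big_split /= -Em -Eb subrr.
have k0 i : (k i)%:~R = 0 :> R.
  have := base_coord0 sum0 i; have := k_ge0 i; have := m_ge0 i.
  rewrite -!(ler0z R); lra.
move: (root_neq0 bPhi); rewrite Eb big1 ?eqxx // => i _.
by rewrite k0 scale0r.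
Qed.

(* Reflection in a simple root a changes only the a-coordinate of b, and b
   has some other coordinate > 0 unless b = a, by reducedness. *)
Lemma refl_simple_pos (j : 'I_(size S)) b : b \in Phi -> nonneg_comb S b ->
  b != S`_j -> nonneg_comb S (refl S`_j b).
Proof.
move=> bPhi [k [k_ge0 Eb]] b_neq.
have aPhi := simple_root j.
have [i /andP[ij ki]] : exists i, (i != j) && (k i != 0).
  apply/existsP; apply: contraNT b_neq => /existsPn only_j.
  have Eb' : b = (k j)%:~R *: S`_j.
    rewrite Eb (bigD1 j) //= big1 ?addr0 // => i ij.
    by move: (only_j i); rewrite ij negbK => /eqP->; rewrite scale0r.
  move: (bPhi); rewrite Eb' => /(root_reduced aPhi) [kj1|kjN1].
    by rewrite kj1 scale1r.
  by move: (k_ge0 j); rewrite -(ler0z R) kjN1; lra.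
have rbPhi := refl_root aPhi bPhi.
case: baseS => _ _ /(_ _ rbPhi) [//|[m [m_ge0 Em]]].
have [z Ez] := cartan_int aPhi bPhi.
pose x i := (k i)%:~R + (m i)%:~R - (if i == j then z%:~R else 0) : R.
have sum0 : \sum_(i < size S) x i *: S`_i = 0.
  rewrite /x; under eq_bigr do rewrite scalerBl scalerDl.
  rewrite sumrB big_split /= -Em -Eb sum_base_delta /refl Ez.
  by rewrite opprB addrC subrK subrr.
have := base_coord0 sum0 i; rewrite /x (negbTE ij) subr0.
have := k_ge0 i; have := m_ge0 i; rewrite -!(ler0z R).
move: ki; rewrite -(intr_eq0 R) => /eqP; lra.
Qed.

Lemma mem_pos_roots b :
  (b \in pos_roots Phi S) = (b \in Phi) && `[< nonneg_comb S b >].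
Proof. by rewrite mem_filter andbC. Qed.

Lemma refl_simple_perm (j : 'I_(size S)) (rest := rem S`_j (pos_roots Phi S)) :
  perm_eq rest (map (refl S`_j) rest).
Proof.
have aPhi := simple_root j; have a0 := root_neq0 aPhi.
have uniq_pos : uniq (pos_roots Phi S).
  by case: rsPhi => [[uPhi _] _ _ _ _]; rewrite filter_uniq.
have uniq_rest : uniq rest := rem_uniq _ uniq_pos.
have uniq_map : uniq (map (refl S`_j) rest).
  by rewrite map_inj_uniq //; apply: can_inj (reflK a0).
have sub : {subset map (refl S`_j) rest <= rest}.
  move=> _ /mapP[b + ->]; rewrite !mem_rem_uniq //.
  rewrite !inE mem_pos_roots => /andP[b_neq /andP[bPhi /asboolP b_pos]].
  rewrite mem_pos_roots refl_root //=; apply/andP; split.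
    apply/eqP => Eb; apply: (nonneg_comb_root_opp aPhi (nonneg_comb_simple j)).
    by have -> : - S`_j = b by rewrite -(reflK a0 b) Eb refl_self.
  by apply/asboolP; apply: refl_simple_pos.
have [_ same_mem] := uniq_min_size uniq_map sub (eq_leq (esym (size_map _ _))).
by apply: uniq_perm => // x; rewrite same_mem.
Qed.

Lemma rho_coroot_simple (j : 'I_(size S)) : dot (rho Phi S) (coroot S`_j) = 1.
Proof.
have a0 := root_neq0 (simple_root j).
have a_pos : S`_j \in pos_roots Phi S.
  by rewrite mem_pos_roots simple_root; apply/asboolP; apply: nonneg_comb_simple.
set rest := rem S`_j (pos_roots Phi S).
have rest0 : \sum_(b <- rest) dot b (coroot S`_j) = 0.
  have := perm_big _ (refl_simple_perm j) (P := xpredT) (op := +%R) (x := 0)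
    (F := fun b => dot b (coroot S`_j)).
  rewrite big_map -/rest.
  under [in RHS]eq_bigr do rewrite refl_adj refl_coroot // dotNr.
  by rewrite sumrN; lra.
rewrite /rho dotZl dot_suml (perm_big _ (perm_to_rem a_pos)) big_cons -/rest.
by rewrite /= rest0 dot_coroot_self // addr0 mulVf // pnatr_eq0.
Qed.

Lemma rho_coroot_base a : a \in S -> dot (rho Phi S) (coroot a) = 1.
Proof.
move=> aS; have ltaS : (index a S < size S)%N by rewrite index_mem.
by have := rho_coroot_simple (Ordinal ltaS); rewrite /= nth_index.
Qed.

Lemma rho_simple_ge0 (j : 'I_(size S)) : 0 <= dot (rho Phi S) S`_j.
Proof.
have N_gt0 := dot_self_gt0 (root_neq0 (simple_root j)).
have : 0 < 2 / dot S`_j S`_j by rewrite divr_gt0.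
have := rho_coroot_simple j; rewrite dot_coroot.
set c := 2 / _; set x := dot _ _; nra.
Qed.

Lemma rho_nonneg_comb v : nonneg_comb S v -> 0 <= dot (rho Phi S) v.
Proof.
move=> [k [k_ge0 ->]]; rewrite dotC dot_suml; apply: sumr_ge0 => i _.
by rewrite dotZl dotC mulr_ge0 ?ler0z ?rho_simple_ge0.
Qed.

Lemma weyl_adjoint w : weyl Phi w -> exists w' : V -> V,
  [/\ forall u v, dot (w u) v = dot u (w' v),
      forall b, b \in Phi -> w' b \in Phi,
      forall v, dot (w' v) (w' v) = dot v v &
      forall (c : R) v, w' (c *: v) = c *: w' v].
Proof.
elim=> [|a w1 aPhi _ [w' [adj rootw' isow' linw']]]; first by exists id.
exists (fun v => w' (refl a v)); split=> [u v|b bPhi|v|c v].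
- by rewrite refl_adj adj.
- by rewrite rootw' ?refl_root.
- by rewrite isow' refl_iso ?root_neq0.
- by rewrite reflZ linw'.
Qed.

End RootSystem.

Section HighestShortRoot.
Variables (R : realType) (n : nat) (Phi S : seq 'rV[R]_n) (a0 : 'rV[R]_n).
Notation V := 'rV[R]_n.
Implicit Types (b d g : V).
Hypothesis rsPhi : is_root_system Phi.
Hypothesis irrPhi : irreducible_rs Phi.
Hypothesis baseS : is_base Phi S.
Hypothesis normPhi : short_normalized Phi.
Hypothesis highest : highest_short_root Phi S a0.

Lemma highest_root : a0 \in Phi.
Proof. by case: highest => [[]]. Qed.

Lemma highest_norm : dot a0 a0 = 2.
Proof. by apply: normPhi; case: highest. Qed.

Lemma root_norm_ge2 b : b \in Phi -> 2 <= dot b b.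
Proof. by move=> bPhi; rewrite -highest_norm; case: highest => [[_ ->]]. Qed.

Lemma rho_short_le_highest b : b \in Phi -> dot b b = 2 ->
  dot (rho Phi S) b <= dot (rho Phi S) a0.
Proof.
move=> bPhi b2; have b_short : short_root Phi b.
  by split=> // c cPhi; rewrite b2 root_norm_ge2.
case: highest => _ /(_ _ b_short) /(rho_nonneg_comb rsPhi baseS).
by rewrite dotBr subr_ge0.
Qed.

Lemma rho_highest_ge0 : 0 <= dot (rho Phi S) a0.
Proof.
have := rho_short_le_highest (oppr_root rsPhi highest_root).
by rewrite dotNl dotNr opprK highest_norm dotNr => /(_ erefl); lra.
Qed.

(* The roots orthogonal to every short root form, with their complement,
   an orthogonal splitting of Phi, which irreducibility forbids. *)
Lemma exists_short_nonorth g : g \in Phi ->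
  exists d, [/\ d \in Phi, dot d d = 2 & dot g d != 0].
Proof.
move=> gPhi; have [/hasP[d dPhi /andP[/eqP d2 gd]]|/hasPn no_d] :=
  boolP (has (fun d => (dot d d == 2) && (dot g d != 0)) Phi).
  by exists d.
pose P b := all (fun d => (dot d d != 2) || (dot b d == 0)) Phi.
have orthP a b : a \in Phi -> b \in Phi -> P a -> ~~ P b -> dot a b = 0.
  move=> aPhi bPhi /allP Pa /allPn[d dPhi]; rewrite negb_or negbK.
  case/andP=> /eqP d2 bd; have rdPhi := refl_root rsPhi bPhi dPhi.
  have rd2 : dot (refl b d) (refl b d) = 2.
    by rewrite refl_iso ?d2 ?(root_neq0 rsPhi bPhi).
  move: (Pa _ dPhi) (Pa _ rdPhi); rewrite rd2 d2 eqxx /= /refl dotBr dotZr.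
  move=> /eqP->; rewrite sub0r oppr_eq0 mulf_eq0 => /orP[|/eqP //].
  rewrite dot_coroot dotC !mulf_eq0 invr_eq0 dot_self_eq0 pnatr_eq0.
  by rewrite (negbTE bd) (negbTE (root_neq0 rsPhi bPhi)).
case: (irrPhi orthP) => /allP PPhi.
  move: (PPhi _ highest_root) => /allP /(_ _ highest_root).
  by rewrite highest_norm eqxx /= pnatr_eq0.
move: (PPhi _ gPhi) => /= /negP[]; apply/allP => d dPhi.
by move: (no_d _ dPhi); rewrite negb_and negbK.
Qed.

Lemma long_root_short_coroot1 g : g \in Phi -> 2 < dot g g ->
  exists d, [/\ d \in Phi, dot d d = 2 & dot d (coroot g) = 1].
Proof.
move=> gPhi g_long; have [d [dPhi d2 gd]] := exists_short_nonorth gPhi.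
have [z Ez] := cartan_int rsPhi gPhi dPhi.
have gz : z%:~R * dot g g = 2 * dot g d.
  by rewrite -Ez dot_coroot dotC; field; rewrite gt_eqF //; lra.
have CS : dot g d ^+ 2 <= dot g g * 2 by rewrite -d2 dot_sqr_le // d2.
have z_sqr : (z%:~R : R) ^+ 2 < 4 by nra.
have z_neq0 : z != 0.
  apply: contra_neq gd => z0; move: gz; rewrite z0 mul0r => /esym/eqP.
  by rewrite mulf_eq0 pnatr_eq0 => /eqP.
have [z1|zN1] := intr_sqr_lt4 z_sqr z_neq0.
  by exists d; rewrite Ez z1.
exists (- d); split; first exact: oppr_root.
  by rewrite dotNl dotNr opprK.
by rewrite dotNl Ez zN1 opprK.
Qed.

Lemma long_root_split g : g \in Phi -> 2 < dot g g ->
  exists d, [/\ d \in Phi, dot d d = 2, g - d \in Phi,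
                dot (g - d) (g - d) = 2 & 4 <= dot g g].
Proof.
move=> gPhi g_long; have [d [dPhi d2 dg1]] := long_root_short_coroot1 gPhi g_long.
have gd : dot g g = 2 * dot g d.
  have : dot g g * (2 / dot g g * dot g d) = 2 * dot g d.
    by field; rewrite gt_eqF //; lra.
  by rewrite (dotC g d) -dot_coroot dg1 mulr1.
have [z Ez] := cartan_int rsPhi dPhi gPhi; rewrite coroot_norm2 // in Ez.
exists d; split=> //.
- have -> : g - d = - refl g d by rewrite /refl dg1 scale1r opprB.
  by rewrite oppr_root ?refl_root.
- by rewrite !(dotBl, dotBr) d2 (dotC d g) gd; ring.
- by move: gd; rewrite Ez => gz; have := @intr_gt1 R z; lra.
Qed.

Lemma rho_coroot_le_highest g : g \in Phi ->
  dot (rho Phi S) (coroot g) <= dot (rho Phi S) a0.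
Proof.
move=> gPhi; have := root_norm_ge2 gPhi; rewrite le_eqVlt => /orP[/eqP g2|g_long].
  by rewrite coroot_norm2 // rho_short_le_highest.
have [d [dPhi d2 gdPhi gd2 g_ge4]] := long_root_split gPhi g_long.
have -> : coroot g = (2 / dot g g) *: (d + (g - d)) by rewrite addrC subrK.
rewrite dotZr dotDr.
have := rho_short_le_highest dPhi d2; have := rho_short_le_highest gdPhi gd2.
have := rho_highest_ge0.
have : 2 / dot g g * dot g g = 2 by rewrite mulfVK // gt_eqF //; lra.
have : 0 < 2 / dot g g by rewrite divr_gt0 //; lra.
move: g_ge4; set c := 2 / _; set N := dot g g; set x := dot _ d; set y := dot _ (g - d).
set M := dot _ a0; nra.
Qed.

End HighestShortRoot.

Theorem proposition2p2p2 (R : realType) (n : nat) (Phi S : seq 'rV[R]_n)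
  (a0 : 'rV[R]_n) (w : 'rV[R]_n -> 'rV[R]_n) :
  is_root_system Phi -> irreducible_rs Phi -> is_base Phi S ->
  short_normalized Phi -> highest_short_root Phi S a0 -> weyl Phi w ->
  - 2 * (coxeter_number Phi S a0 - 1) <= dot (dot_act Phi S w 0) (coroot a0)
  /\ (forall a, a \in S ->
        dot (dot_act Phi S w 0) (coroot a) <= coxeter_number Phi S a0 - 2).
Proof.
move=> rsPhi irrPhi baseS normPhi highest weylw.
have [w' [adj rootw' isow' linw']] := weyl_adjoint rsPhi weylw.
have a0_2 := highest_norm normPhi highest.
have rho_le := rho_coroot_le_highest rsPhi irrPhi baseS normPhi highest.
rewrite /dot_act add0r /coxeter_number (coroot_norm2 a0_2); split=> [|a aS].
  have w'a0Phi := rootw' _ (highest_root highest).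
  have := rho_le _ (oppr_root rsPhi w'a0Phi).
  rewrite coroot_norm2; last by rewrite dotNl dotNr opprK isow'.
  by rewrite dotNr dotBl adj; lra.
rewrite dotBl adj (rho_coroot_base rsPhi baseS aS).
have -> : w' (coroot a) = coroot (w' a) by rewrite /coroot linw' isow'.
by have := rho_le _ (rootw' _ (base_root baseS aS)); lra.
Qed.
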